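(* Let $U_1,\dots,U_d$ be left-orthogonal TT cores with left interface matrices $X_{\le k}$, and let $\delta V_1,\dots,\delta V_d$ be cores of the same sizes satisfying $(\delta V_k^L)^\top U_k^L=0$ for all $k\in[d-1]$, with variational interface matrices $V_{\le k}$. Then $V_{\le k}^\top X_{\le k}=0$ for all $k\in[d-1]$.
   Context: Fix $d\ge2$, positive integers $n_1,\dots,n_d$, $r_0=r_d=1$, $r_1,\dots,r_{d-1}\ge1$. Cores $U_k,\delta V_k\in\mathbb R^{r_{k-1}\times n_k\times r_k}$. For $U\in\mathbb R^{a\times n\times b}$, $U^L\in\mathbb R^{an\times b}$ has entry $U(\alpha,i,\beta)$ at row $\alpha+(i-1)a$, column $\beta$. Left-orthogonal: $(U_k^L)^\top U_k^L=I_{r_k}$ for $k\in[d-1]$. Interface matrices: $X_{\le0}=1$, $X_{\le k}=(I_{n_k}\otimes X_{\le k-1})U_k^L$. Variational interface matrices: $V_{\le0}=0$, $V_{\le k}=(I_{n_k}\otimes V_{\le k-1})U_k^L+(I_{n_k}\otimes X_{\le k-1})\delta V_k^L$. *)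

From HB Require Import structures.
From mathcomp Require Import all_boot all_order all_algebra.
From mathcomp Require Export mxtens.
Set Implicit Arguments. Unset Strict Implicit. Unset Printing Implicit Defensive.
Import GRing.Theory Num.Theory.
Local Open Scope ring_scope.

Definition core (R : Type) (a n b : nat) := 'I_a -> 'I_n -> 'I_b -> R.

(* Left unfolding U^L in R^{an x b}: entry U(alpha,i,beta) at row
   alpha + i*a (0-based), column beta.  We use the row-index type
   'I_(n * a), whose index i*a + alpha is mxtens_index (i, alpha). *)
Definition unfoldL (R : Type) (a n b : nat) (U : core R a n b) : 'M[R]_(n * a, b) :=
  \matrix_(row, beta) U (mxtens_unindex row).2 (mxtens_unindex row).1 beta.

(* Number of rows of X_{<= k}: n_1 * ... * n_k (with the product order
   n_k * (n_{k-1} * ...) matching I_{n_k} (x) X_{<= k-1}). *)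
Fixpoint rowdim (n : nat -> nat) (k : nat) : nat :=
  match k with 0 => 1%N | k'.+1 => (n k'.+1 * rowdim n k')%N end.

(* Interface matrices: X_{<=0} = 1 (a 1 x r_0 matrix; r_0 = 1 is a
   hypothesis of the theorem), X_{<=k} = (I_{n_k} (x) X_{<=k-1}) U_k^L. *)
Fixpoint Xle (R : pzRingType) (n r : nat -> nat)
    (U : forall k, core R (r k.-1) (n k) (r k)) (k : nat) : 'M[R]_(rowdim n k, r k) :=
  match k with
  | 0 => const_mx 1
  | k'.+1 => ((1%:M : 'M[R]_(n k'.+1)) *t Xle U k') *m unfoldL (U k'.+1)
  end.

Fixpoint Vle (R : pzRingType) (n r : nat -> nat)
    (U dV : forall k, core R (r k.-1) (n k) (r k)) (k : nat)
    : 'M[R]_(rowdim n k, r k) :=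
  match k with
  | 0 => 0
  | k'.+1 => ((1%:M : 'M[R]_(n k'.+1)) *t Vle U dV k') *m unfoldL (U k'.+1)
           + ((1%:M : 'M[R]_(n k'.+1)) *t Xle U k') *m unfoldL (dV k'.+1)
  end.

From mathcomp Require Import all_boot all_order all_algebra.
Import GRing.Theory Num.Theory.
Local Open Scope ring_scope.

(* Induction on k, carrying the orthonormality of X_{<=k} along: the Gram
   matrix of (I (x) A) C against (I (x) B) D is C^T (I (x) A^T B) D, so
   X_{<=k}^T X_{<=k} = U_k^L^T U_k^L = I and
   V_{<=k}^T X_{<=k} = U_k^L^T (I (x) V_{<=k-1}^T X_{<=k-1}) U_k^L + dV_k^L^T U_k^L = 0. *)

Lemma tens1mx1 (R : comPzRingType) (p q : nat) :
  (1%:M : 'M[R]_p) *t (1%:M : 'M[R]_q) = 1%:M.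
Proof.
apply/matrixP=> i j.
case: (mxtens_indexP i) => i0 i1; case: (mxtens_indexP j) => j0 j1.
rewrite tensmxE !mxE (inj_eq (can_inj (@mxtens_indexK _ _))) xpair_eqE.
by case: (i0 == j0); case: (i1 == j1); rewrite ?mulr1 ?mulr0.
Qed.

Lemma trmx_const1_mul (R : pzRingType) (m : nat) :
  m = 1%N -> (const_mx 1 : 'M[R]_(1, m))^T *m const_mx 1 = 1%:M.
Proof.
move=> ->; apply/matrixP=> i j.
by rewrite [i]ord1 [j]ord1 !mxE big_ord1 !mxE mulr1.
Qed.

Lemma gram_tens1mx (R : comPzRingType) (q p m m' s t : nat)
    (A : 'M[R]_(p, m)) (B : 'M[R]_(p, m'))
    (C : 'M[R]_(q * m, s)) (D : 'M[R]_(q * m', t)) :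
  ((1%:M : 'M_q) *t A *m C)^T *m ((1%:M : 'M_q) *t B *m D)
  = C^T *m ((1%:M : 'M_q) *t (A^T *m B)) *m D.
Proof.
by rewrite trmx_mul trmx_tens trmx1 !mulmxA -[C^T *m (_ *t A^T) *m _]mulmxA tensmx_mul mul1mx.
Qed.

Section InterfaceMatrices.

Variables (R : comPzRingType) (n r : nat -> nat) (K : nat).
Variables U dV : forall k : nat, core R (r k.-1) (n k) (r k).

Hypothesis r0 : r 0%N = 1%N.
Hypothesis U_leftorth : forall k, (1 <= k <= K)%N ->
  (unfoldL (U k))^T *m unfoldL (U k) = 1%:M.
Hypothesis dV_orthU : forall k, (1 <= k <= K)%N ->
  (unfoldL (dV k))^T *m unfoldL (U k) = 0.

Lemma Xle_orthonormal (k : nat) :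
  (k <= K)%N -> (Xle U k)^T *m Xle U k = 1%:M.
Proof.
elim: k => [|k IHk] le_kK /=; first exact: trmx_const1_mul.
have k1_in : (1 <= k.+1 <= K)%N by rewrite le_kK.
by rewrite gram_tens1mx IHk ?(ltnW le_kK) // tens1mx1 mulmx1 U_leftorth.
Qed.

Lemma Vle_orthX (k : nat) :
  (k <= K)%N -> (Vle U dV k)^T *m Xle U k = 0.
Proof.
elim: k => [|k IHk] le_kK /=; first by rewrite trmx0 mul0mx.
have le_kK' := ltnW le_kK.
have k1_in : (1 <= k.+1 <= K)%N by rewrite le_kK.
rewrite linearD mulmxDl !gram_tens1mx IHk // Xle_orthonormal //.
by rewrite tensmx0 mulmx0 mul0mx add0r tens1mx1 mulmx1 dV_orthU.
Qed.

End InterfaceMatrices.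

Theorem lemma18 (R : realFieldType) (d : nat) (n r : nat -> nat)
    (U dV : forall k : nat, core R (r k.-1) (n k) (r k)) :
  (2 <= d)%N ->
  (forall k, (1 <= k <= d)%N -> (1 <= n k)%N) ->
  r 0%N = 1%N -> r d = 1%N ->
  (forall k, (1 <= k <= d.-1)%N -> (1 <= r k)%N) ->
  (forall k, (1 <= k <= d.-1)%N ->
     (unfoldL (U k))^T *m unfoldL (U k) = 1%:M) ->
  (forall k, (1 <= k <= d.-1)%N ->
     (unfoldL (dV k))^T *m unfoldL (U k) = 0) ->
  forall k, (1 <= k <= d.-1)%N -> (Vle U dV k)^T *m Xle U k = 0.
Proof.
move=> _ _ r0 _ _ U_leftorth dV_orthU k /andP[_ le_kd].
exact: Vle_orthX r0 U_leftorth dV_orthU k le_kd.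
Qed.
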